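(* Let $\rho=|\psi\rangle\langle\psi|$ be an $n$-qubit pure state, let $S\subseteq[n]$ be a non-empty set of qubit labels with $s:=|S|$, and let $U=\bigotimes_{i\in S}U_i$ (acting as the identity on qubits outside $S$), where the $U_i\in U(2)$ are independent Haar-random single-qubit unitaries. For $\mathbf{z}\in\{0,1\}^s$ let $P_U(\mathbf{z})=\operatorname{tr}\big(U\rho U^\dagger(|\mathbf{z}\rangle\langle\mathbf{z}|\otimes \mathbb{I}_{[n]\setminus S})\big)$ be the probability of obtaining the bitstring $\mathbf{z}$ when the qubits in $S$ are measured in the computational basis after applying $U$. Then for every fixed bitstring $\mathbf{z}\in\{0,1\}^s$, $$\mathcal{C}_{|\psi\rangle}(S)=1-3^s\,\mathbb{E}_U\big[P_U(\mathbf{z})^2\big],$$ where $\mathbb{E}_U$ denotes the average over the Haar measure.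
   Context: $[n]=\{1,\dots,n\}$ labels the qubits. For an $n$-qubit pure state $|\psi\rangle$ and a non-empty $S\subseteq[n]$ with $s=|S|$, the concentratable entanglement is $\mathcal{C}_{|\psi\rangle}(S)=1-\frac{1}{2^s}\sum_{\alpha\subseteq S}\operatorname{tr}(\rho_\alpha^2)$, where $\rho_\alpha$ is the reduced state of $|\psi\rangle\langle\psi|$ on the qubits in $\alpha$ (all others traced out), and $\operatorname{tr}(\rho_\emptyset^2):=1$. *)

From HB Require Import structures.
From mathcomp Require Import all_boot all_order all_algebra.
From mathcomp Require Import all_classical all_reals all_analysis.
From mathcomp Require Import complex.
Set Implicit Arguments. Unset Strict Implicit. Unset Printing Implicit Defensive.
Import Order.TTheory GRing.Theory Num.Theory.
Local Open Scope ring_scope.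

(* computational-basis labels of n qubits: bitstrings x : 'I_n -> bool *)
Definition bits (n : nat) := {ffun 'I_n -> bool}.

Section Quantum.
Variable R : realType.
Local Notation C := R[i].

Definition sqnorm (z : C) : R := complex.Re z ^+ 2 + complex.Im z ^+ 2.

(* the bit b as a row/column index of a single-qubit 2x2 matrix *)
Definition b2o (b : bool) : 'I_2 := if b then ord_max else ord0.

Variable n : nat.

Definition merge (alpha : {set 'I_n}) (a c : bits n) : bits n :=
  [ffun i => if i \in alpha then a i else c i].

(* bitstrings "living on" A: zero outside A (labels of the basis of qubits A) *)
Definition supp_in (A : {set 'I_n}) (x : bits n) : bool :=
  [forall i, (i \notin A) ==> ~~ x i].

(* reduced state rho_alpha = tr_{[n]\alpha} |psi><psi|, entry (a,b),
   with a, b bitstrings on alpha *)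
Definition reduced (psi : bits n -> C) (alpha : {set 'I_n}) (a b : bits n) : C :=
  \sum_(c : bits n | supp_in (~: alpha) c)
     psi (merge alpha a c) * (psi (merge alpha b c))^*.

(* tr(rho_alpha^2), with tr(rho_emptyset^2) := 1 *)
Definition purity (psi : bits n -> C) (alpha : {set 'I_n}) : C :=
  if alpha == finset.set0 then 1 else
  \sum_(a : bits n | supp_in alpha a) \sum_(b : bits n | supp_in alpha b)
     reduced psi alpha a b * reduced psi alpha b a.

Definition conc_ent (psi : bits n -> C) (S : {set 'I_n}) : C :=
  1 - (2 ^+ #|S|)^-1 * \sum_(alpha : {set 'I_n} | alpha \subset S) purity psi alpha.

(* (U psi)(x) for U = (tensor_{i in S} M i) tensor identity on [n]\S *)
Definition applyU (S : {set 'I_n}) (M : 'I_n -> 'M[C]_2) (psi : bits n -> C)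
    (x : bits n) : C :=
  \sum_(y : bits n)
     (\prod_(i < n) (if i \in S then M i (b2o (x i)) (b2o (y i))
                     else ((x i == y i)%:R : C))) * psi y.

(* P_U(z) = tr(U rho U^dagger (|z><z| (x) I_{[n]\S})): probability of outcome
   z (the bits of z at positions in S) when measuring the qubits of S *)
Definition probU (S : {set 'I_n}) (M : 'I_n -> 'M[C]_2) (psi : bits n -> C)
    (z : bits n) : R :=
  \sum_(x : bits n | [forall i, (i \in S) ==> (x i == z i)])
     sqnorm (applyU S M psi x).

End Quantum.

Section Haar.
Local Open Scope classical_set_scope.
Variable R : realType.
Local Notation C := R[i].

Definition unitary2 (M : 'M[C]_2) : Prop :=
  M *m (map_mx conjc M)^T = 1%:M.

(* real coordinates of a 2x2 complex matrix (embedding of U(2) into R^8) *)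
Definition mx_coords (M : 'M[C]_2) : 8.-tuple R :=
  [tuple complex.Re (M ord0 ord0); complex.Im (M ord0 ord0); complex.Re (M ord0 ord_max); complex.Im (M ord0 ord_max);
         complex.Re (M ord_max ord0); complex.Im (M ord_max ord0); complex.Re (M ord_max ord_max);
         complex.Im (M ord_max ord_max)].

(* U : Omega -> U(2) is a Haar-distributed random unitary: unitary-valued,
   measurable, and its law (on U(2) viewed inside R^8) is left-invariant
   (which characterises the Haar probability measure on the compact group U(2)). *)
Definition haar_unitary d (Omega : measurableType d) (P : probability Omega R)
    (U : Omega -> 'M[C]_2) : Prop :=
  [/\ forall w, unitary2 (U w),
      measurable_fun setT (mx_coords \o U) &
      forall V : 'M[C]_2, unitary2 V ->
        forall A : set (8.-tuple R), measurable A ->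
          P [set w | A (mx_coords (V *m U w))] = P [set w | A (mx_coords (U w))]].

Definition mutually_independent d (Omega : measurableType d) (P : probability Omega R)
    n (S : {set 'I_n}) (U : 'I_n -> Omega -> 'M[C]_2) : Prop :=
  forall A : 'I_n -> set (8.-tuple R), (forall i, measurable (A i)) ->
    P [set w | forall i, i \in S -> A i (mx_coords (U i w))] =
    (\prod_(i in S) P [set w | A i (mx_coords (U i w))])%E.

End Haar.

From Pilot Require Import Defs.
From HB Require Import structures.
From mathcomp Require Import all_boot all_order all_algebra.
From mathcomp Require Import all_classical all_reals all_analysis.
From mathcomp Require Import measurable_realfun complex.
From mathcomp Require Import ring.
Set Implicit Arguments. Unset Strict Implicit. Unset Printing Implicit Defensive.
Import Order.TTheory GRing.Theory Num.Theory.
Local Open Scope ring_scope.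

(* The six single-qubit unitaries V_k of [design_mx] form a unitary 2-design.
   For any unitaries M_i, the average of P_W(z)^2 over the 6^n products
   W = (V_(k i) M_i)_i expands, like every purity tr(rho_A^2) (swap trick), into
   a fourth moment sum psi(y1) psi(y2)^* psi(y3) psi(y4)^* weighted by a product
   over qubits of the deltas [y1 = y2, y3 = y4] and [y1 = y4, y3 = y2]; summing
   over A in S gives 6^-n sum_k P_(V_k M)(z)^2 = 6^-s sum_A tr(rho_A^2)
   = 3^-s (1 - C(S)), whatever the M_i.  Left invariance of each Haar factor and
   independence make (V_i U_i)_i and (U_i)_i agree on measurable rectangles, hence
   equal in law, so E[P_U(z)^2] = E[P_(V_k U)(z)^2] for every k: the expectation
   is that of the constant design average. *)

Definition delta_id {K : pzSemiRingType} {T : eqType} (b1 b2 b3 b4 : T) : K :=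
  ((b1 == b2) && (b3 == b4))%:R.
Definition delta_swap {K : pzSemiRingType} {T : eqType} (b1 b2 b3 b4 : T) : K :=
  ((b1 == b4) && (b3 == b2))%:R.

Section BigOps.
Variable K : comPzSemiRingType.

Lemma sum_delta (T : finType) (m : T) (F : T -> K) :
  \sum_y ((y == m)%:R * F y) = F m.
Proof.
rewrite (bigD1 m) //= eqxx mul1r big1 ?addr0 // => y /negbTE ->.
by rewrite mul0r.
Qed.

Lemma prod_nat_forall (I : finType) (P : pred I) :
  \prod_i ((P i)%:R : K) = [forall i, P i]%:R.
Proof.
case: (boolP [forall i, P i]) => [/forallP allP|].
  by rewrite big1 // => i _; rewrite allP.
rewrite negb_forall => /existsP [i /negbTE Pi].
by rewrite (bigD1 i) //= Pi mul0r.
Qed.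

Lemma sum_subsets_prod (I : finType) (S : {set I}) (f g : I -> K) :
  \sum_(A : {set I} | A \subset S) \prod_i (if i \in A then g i else f i) =
  \prod_i (if i \in S then f i + g i else f i).
Proof.
transitivity (\prod_i ((if i \in S then g i else 0) + f i)); last first.
  by apply: eq_bigr => i _; case: (i \in S); rewrite ?add0r // addrC.
rewrite bigA_distr big_mkcond /=; apply: eq_bigr => A _.
case: ifP => [/fintype.subsetP AS | /negbT /fintype.subsetPn [i iA iNS]].
  by apply: eq_bigr => i _; case: ifP => // /AS ->.
by rewrite (bigD1 i) //= iA (negbTE iNS) mul0r.
Qed.

Lemma mulr_sum4 (I : finType) (f g h q : I -> K) :
  (\sum_i f i) * (\sum_i g i) * (\sum_i h i) * (\sum_i q i) =
  \sum_i1 \sum_i2 \sum_i3 \sum_i4 f i1 * g i2 * h i3 * q i4.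
Proof.
rewrite !mulr_suml; apply: eq_bigr => i1 _.
rewrite [f i1 * _]mulr_sumr !mulr_suml; apply: eq_bigr => i2 _.
rewrite [f i1 * g i2 * _]mulr_sumr !mulr_suml; apply: eq_bigr => i3 _.
by rewrite mulr_sumr.
Qed.

Lemma prod_if1 (I : finType) (S : {set I}) (c : K) :
  \prod_i (if i \in S then 1 else c) = c ^+ #|~: S|.
Proof.
rewrite -prodr_const [RHS]big_mkcond; apply: eq_bigr => i _.
by rewrite finset.in_setC; case: (i \in S).
Qed.

End BigOps.

Section Restrict.
Variable n : nat.
Local Notation merge := Defs.merge.

Definition restrict (A : {set 'I_n}) (x : bits n) : bits n :=
  [ffun i => (i \in A) && x i].

Lemma merge_restrict (A : {set 'I_n}) (u v : bits n) :
  merge A (restrict A u) (restrict (~: A) v) = merge A u v.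
Proof. by apply/ffunP => i; rewrite !ffunE finset.in_setC; case: (i \in A). Qed.

Lemma mergexx (A : {set 'I_n}) (u : bits n) : merge A u u = u.
Proof. by apply/ffunP => i; rewrite !ffunE; case: (i \in A). Qed.

Lemma merge0 (u v : bits n) : merge finset.set0 u v = v.
Proof. by apply/ffunP => i; rewrite !ffunE finset.in_set0. Qed.

Lemma sum_supp_split (K : nmodType) (A : {set 'I_n}) (F : bits n -> bits n -> K) :
  \sum_(a | supp_in A a) \sum_(c | supp_in (~: A) c) F a c =
  \sum_(x : bits n) F (restrict A x) (restrict (~: A) x).
Proof.
rewrite pair_big /= (reindex (fun x => (restrict A x, restrict (~: A) x))) /=.
  apply: eq_bigl => x; apply/andP; split; apply/forallP => i; apply/implyP;
  by rewrite ffunE => /negbTE ->.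
exists (fun p : bits n * bits n => merge A p.1 p.2) => [x _|[a c]].
  by rewrite /= merge_restrict mergexx.
rewrite inE /= => /andP [/forallP a_supp /forallP c_supp].
congr (_, _); apply/ffunP => i; rewrite !ffunE ?finset.in_setC;
  case: (boolP (i \in A)) => //= iA.
- by have := a_supp i; rewrite iA /=; case: (a i).
- by have := c_supp i; rewrite finset.in_setC iA /=; case: (c i).
Qed.

End Restrict.

Section ComplexParts.
Variable R : realType.
Local Notation C := R[i].

Lemma sqnormE (x : C) : (sqnorm x)%:C%C = x * x^*.
Proof.
case: x => a b; rewrite /sqnorm /=; apply/eqP; rewrite eq_complex /=.
by apply/andP; split; apply/eqP; ring.
Qed.

Lemma Re_add (x y : C) : complex.Re (x + y) = complex.Re x + complex.Re y.
Proof. by case: x; case: y. Qed.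

Lemma Im_add (x y : C) : complex.Im (x + y) = complex.Im x + complex.Im y.
Proof. by case: x; case: y. Qed.

Lemma Re_mul (x y : C) :
  complex.Re (x * y) = complex.Re x * complex.Re y - complex.Im x * complex.Im y.
Proof. by case: x; case: y. Qed.

Lemma Im_mul (x y : C) :
  complex.Im (x * y) = complex.Re x * complex.Im y + complex.Im x * complex.Re y.
Proof. by case: x => a b; case: y => c e /=; rewrite addrC. Qed.

End ComplexParts.

Section Moment4.
Variables (R : realType) (n : nat) (psi : bits n -> R[i]).
Local Notation C := R[i].
Local Notation merge := Defs.merge.

Definition psi4 (y1 y2 y3 y4 : bits n) : C :=
  psi y1 * (psi y2)^* * psi y3 * (psi y4)^*.

Definition moment4 (w : 'I_n -> bool -> bool -> bool -> bool -> C) : C :=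
  \sum_(y1 : bits n) \sum_(y2 : bits n) \sum_(y3 : bits n) \sum_(y4 : bits n)
    (\prod_i w i (y1 i) (y2 i) (y3 i) (y4 i)) * psi4 y1 y2 y3 y4.

Lemma eq_moment4 (w w' : 'I_n -> bool -> bool -> bool -> bool -> C) :
  (forall i b1 b2 b3 b4, w i b1 b2 b3 b4 = w' i b1 b2 b3 b4) ->
  moment4 w = moment4 w'.
Proof.
move=> ww'; rewrite /moment4; do 4 (apply: eq_bigr => ? _).
by congr (_ * _); apply: eq_bigr => i _.
Qed.

Lemma moment4_scale (c : 'I_n -> C) w :
  moment4 (fun i b1 b2 b3 b4 => c i * w i b1 b2 b3 b4) = (\prod_i c i) * moment4 w.
Proof.
rewrite /moment4 mulr_sumr; apply: eq_bigr => y1 _.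
rewrite mulr_sumr; apply: eq_bigr => y2 _.
rewrite mulr_sumr; apply: eq_bigr => y3 _.
rewrite mulr_sumr; apply: eq_bigr => y4 _.
by rewrite big_split mulrA.
Qed.

Lemma sum_moment4 (J : finType) (w : 'I_n -> J -> bool -> bool -> bool -> bool -> C) :
  \sum_(k : {ffun 'I_n -> J}) moment4 (fun i => w i (k i)) =
  moment4 (fun i b1 b2 b3 b4 => \sum_j w i j b1 b2 b3 b4).
Proof.
rewrite /moment4 exchange_big; apply: eq_bigr => y1 _.
rewrite exchange_big; apply: eq_bigr => y2 _.
rewrite exchange_big; apply: eq_bigr => y3 _.
rewrite exchange_big; apply: eq_bigr => y4 _.
by rewrite -mulr_suml bigA_distr_bigA.
Qed.

Lemma sum_subsets_moment4 (S : {set 'I_n}) (f g : 'I_n -> bool -> bool -> bool -> bool -> C) :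
  \sum_(A : {set 'I_n} | A \subset S)
     moment4 (fun i b1 b2 b3 b4 => if i \in A then g i b1 b2 b3 b4 else f i b1 b2 b3 b4) =
  moment4 (fun i b1 b2 b3 b4 =>
     if i \in S then f i b1 b2 b3 b4 + g i b1 b2 b3 b4 else f i b1 b2 b3 b4).
Proof.
rewrite /moment4 exchange_big; apply: eq_bigr => y1 _.
rewrite exchange_big; apply: eq_bigr => y2 _.
rewrite exchange_big; apply: eq_bigr => y3 _.
rewrite exchange_big; apply: eq_bigr => y4 _.
by rewrite -mulr_suml sum_subsets_prod.
Qed.

Lemma prod_delta_merge (A : {set 'I_n}) (y1 y2 y3 y4 : bits n) :
  \prod_i (if i \in A then delta_swap (y1 i) (y2 i) (y3 i) (y4 i)
           else delta_id (y1 i) (y2 i) (y3 i) (y4 i) : C) =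
  (y2 == merge A y3 y1)%:R * (y4 == merge A y1 y3)%:R.
Proof.
rewrite -natrM mulnb.
transitivity (\prod_i ((if i \in A then (y1 i == y4 i) && (y3 i == y2 i)
                        else (y1 i == y2 i) && (y3 i == y4 i))%:R : C)).
  by apply: eq_bigr => i _; case: (i \in A).
rewrite prod_nat_forall; congr (nat_of_bool _ )%:R.
apply/forallP/andP => [agree | [/eqP-> /eqP->] i]; last first.
  by rewrite !ffunE; case: (i \in A); rewrite !eqxx.
split; apply/eqP/ffunP => i; rewrite ffunE;
  by have := agree i; case: (i \in A) => /andP [/eqP e1 /eqP e2]; rewrite ?e1 ?e2.
Qed.

Lemma moment4_swap (A : {set 'I_n}) :
  moment4 (fun i b1 b2 b3 b4 => if i \in A then delta_swap b1 b2 b3 b4 else delta_id b1 b2 b3 b4) =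
  \sum_(x : bits n) \sum_(x' : bits n)
     psi x * (psi (merge A x' x))^* * psi x' * (psi (merge A x x'))^*.
Proof.
rewrite /moment4; apply: eq_bigr => x _; rewrite exchange_big; apply: eq_bigr => x' _ /=.
under eq_bigr => y2 _ do under eq_bigr => y4 _ do rewrite prod_delta_merge -mulrA.
under eq_bigr => y2 _ do rewrite -mulr_sumr sum_delta.
by rewrite sum_delta.
Qed.

Lemma purity_moment4 (A : {set 'I_n}) :
  \sum_(x : bits n) sqnorm (psi x) = 1 ->
  purity psi A =
  moment4 (fun i b1 b2 b3 b4 => if i \in A then delta_swap b1 b2 b3 b4 else delta_id b1 b2 b3 b4).
Proof.
move=> normalized; rewrite moment4_swap /purity.
have [-> | _] := eqVneq A finset.set0.
  under [RHS]eq_bigr do under eq_bigr do rewrite !merge0.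
  have norm1 : \sum_(x : bits n) psi x * (psi x)^* = 1.
    have := congr1 (fun r : R => r%:C%C) normalized; rewrite rmorph_sum rmorph1 /= => <-.
    by apply: eq_bigr => x _; rewrite sqnormE.
  rewrite -[LHS]mulr1 -{1}norm1 -norm1 mulr_suml; apply: eq_bigr => x _.
  by rewrite mulr_sumr; apply: eq_bigr => x' _; ring.
transitivity (\sum_(a | supp_in A a) \sum_(c | supp_in (~: A) c)
   \sum_(b | supp_in A b) \sum_(c' | supp_in (~: A) c')
   psi (merge A a c) * (psi (merge A b c))^* * psi (merge A b c') * (psi (merge A a c'))^*).
  apply: eq_bigr => a _; rewrite exchange_big /=; apply: eq_bigr => c _.
  rewrite /reduced mulr_suml; apply: eq_bigr => b _.
  by rewrite mulr_sumr; apply: eq_bigr => c' _; ring.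
rewrite sum_supp_split; apply: eq_bigr => x _.
rewrite sum_supp_split; apply: eq_bigr => x' _.
by rewrite !merge_restrict !mergexx.
Qed.

End Moment4.

Section Design.
Variable R : realType.
Local Notation C := R[i].

Definition design_phase (m : nat) : C := nth 0 [:: 1; -1; 'i; -'i]%C m.

(* V_0 = I, V_1 = X and V_(m+2) = ((1+i)/2) [[1, c], [1, -c]] for c = 1, -1, i, -i:
   each row of the V_k runs, up to phase, through the six stabilizer states,
   which form a complex projective 2-design. *)
Definition design_mx (k : 'I_6) : 'M[C]_2 := \matrix_(a, b)
  match val k, val a, val b with
  | 0, a, b => (a == b)%:R
  | 1, a, b => (a != b)%:R
  | _, _, 0 => Complex 2^-1 2^-1
  | m.+2, 0, _ => Complex 2^-1 2^-1 * design_phase m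
  | m.+2, _, _ => - (Complex 2^-1 2^-1 * design_phase m)
  end.

Lemma design_row_moment (r j1 j2 j3 j4 : 'I_2) :
  \sum_k design_mx k r j1 * (design_mx k r j2)^* * design_mx k r j3 * (design_mx k r j4)^*
  = delta_id j1 j2 j3 j4 + delta_swap j1 j2 j3 j4.
Proof.
rewrite /delta_id /delta_swap !big_ord_recr big_ord0 /= !mxE.
case: r => [[|[|//]]] ?; case: j1 => [[|[|//]]] ?; case: j2 => [[|[|//]]] ?;
case: j3 => [[|[|//]]] ?; case: j4 => [[|[|//]]] ?; rewrite /design_phase /=.
all: by apply/eqP; rewrite eq_complex /=; apply/andP; split; apply/eqP; field.
Qed.

Lemma design_mx_unitary k : unitary2 (design_mx k).
Proof.
apply/matrixP => a b; rewrite !mxE !big_ord_recr big_ord0 /= !mxE.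
case: k => [[|[|[|[|[|[|//]]]]]]] ?; case: a => [[|[|//]]] ?; case: b => [[|[|//]]] ?;
  rewrite /design_phase /=.
all: by apply/eqP; rewrite eq_complex /=; apply/andP; split; apply/eqP; field.
Qed.

Lemma unitary2_1 : unitary2 (1%:M : 'M[C]_2).
Proof. by rewrite /unitary2 map_mx1 trmx1 mulmx1. Qed.

Lemma design_moment (M : 'M[C]_2) (r p1 p2 p3 p4 : 'I_2) : unitary2 M ->
  \sum_k (design_mx k *m M) r p1 * ((design_mx k *m M) r p2)^*
         * (design_mx k *m M) r p3 * ((design_mx k *m M) r p4)^*
  = delta_id p1 p2 p3 p4 + delta_swap p1 p2 p3 p4.
Proof.
move=> unitM.
have cols a b : \sum_j (M j a)^* * M j b = (a == b)%:R.
  have := congr1 (fun A : 'M[C]_2 => A a b) (mulmx1C unitM); rewrite !mxE => <-.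
  by apply: eq_bigr => j _; rewrite !mxE.
transitivity (\sum_j1 \sum_j2 \sum_j3 \sum_j4
  (delta_id j1 j2 j3 j4 + delta_swap j1 j2 j3 j4) *
  (M j1 p1 * (M j2 p2)^* * M j3 p3 * (M j4 p4)^*)).
  under eq_bigr do rewrite !mxE !rmorph_sum /= mulr_sum4.
  rewrite exchange_big; apply: eq_bigr => j1 _.
  rewrite exchange_big; apply: eq_bigr => j2 _.
  rewrite exchange_big; apply: eq_bigr => j3 _.
  rewrite exchange_big; apply: eq_bigr => j4 _.
  rewrite -(design_row_moment r) mulr_suml; apply: eq_bigr => k _.
  rewrite !rmorphM /=; ring.
have -> : delta_id p1 p2 p3 p4 + delta_swap p1 p2 p3 p4 =
    (\sum_j (M j p2)^* * M j p1) * (\sum_j (M j p4)^* * M j p3) +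
    (\sum_j (M j p4)^* * M j p1) * (\sum_j (M j p2)^* * M j p3).
  by rewrite !cols /delta_id /delta_swap -!natrM !mulnb ![_ == p1]eq_sym
     [p4 == p3]eq_sym [p2 == p3]eq_sym.
rewrite /delta_id /delta_swap !big_ord_recr !big_ord0 /= !add0r.
ring.
Qed.

End Design.
Arguments design_mx {R} k.

Section Expansion.
Variables (R : realType) (n : nat) (S : {set 'I_n}) (psi : bits n -> R[i]) (z : bits n).
Local Notation C := R[i].

Definition qubit_op i (A : 'M[C]_2) (a b : bool) : C :=
  if i \in S then A (b2o a) (b2o b) else (a == b)%:R.

Definition outcome i (a : bool) : C := if i \in S then (a == z i)%:R else 1.

Definition local_tensor i (A : 'M[C]_2) (a a' b1 b2 b3 b4 : bool) : C :=
  outcome i a * outcome i a' *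
  (qubit_op i A a b1 * (qubit_op i A a b2)^* * qubit_op i A a' b3 * (qubit_op i A a' b4)^*).

Lemma probUE M : (probU S M psi z)%:C%C =
  \sum_(x : bits n) (\prod_i outcome i (x i)) * (applyU S M psi x * (applyU S M psi x)^*).
Proof.
rewrite /probU rmorph_sum big_mkcond /=; apply: eq_bigr => x _.
have -> : \prod_i outcome i (x i) = [forall i, (i \in S) ==> (x i == z i)]%:R.
  by rewrite -prod_nat_forall; apply: eq_bigr => i _; rewrite /outcome; case: (i \in S).
by case: ifP; rewrite ?mul1r ?mul0r // sqnormE.
Qed.

Lemma probU_sqrE M : ((probU S M psi z) ^+ 2)%:C%C =
  \sum_(x : bits n) \sum_(x' : bits n) moment4 psi (fun i => local_tensor i (M i) (x i) (x' i)).
Proof.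
rewrite rmorphXn /= probUE expr2 mulr_suml; apply: eq_bigr => x _.
rewrite mulr_sumr; apply: eq_bigr => x' _.
rewrite /applyU !rmorph_sum /=.
rewrite mulrACA [X in _ * X]mulrA mulr_sum4 /moment4 mulr_sumr; apply: eq_bigr => y1 _.
rewrite mulr_sumr; apply: eq_bigr => y2 _.
rewrite mulr_sumr; apply: eq_bigr => y3 _.
rewrite mulr_sumr; apply: eq_bigr => y4 _.
rewrite /local_tensor /psi4 !rmorphM !rmorph_prod !big_split /=; ring.
Qed.

Lemma eq_probU (M M' : 'I_n -> 'M[C]_2) :
  (forall i, i \in S -> M i = M' i) -> probU S M psi z = probU S M' psi z.
Proof.
move=> MM'; apply: eq_bigr => x _; congr sqnorm; apply: eq_bigr => y _.
by congr (_ * _); apply: eq_bigr => i _; case: ifP => // /MM' ->.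
Qed.

Definition design_mul (k : {ffun 'I_n -> 'I_6}) (M : 'I_n -> 'M[C]_2) i : 'M[C]_2 :=
  design_mx (k i) *m M i.

Lemma b2o_inj : injective b2o.
Proof. by case; case. Qed.

Lemma local_design_sum i (A : 'M[C]_2) b1 b2 b3 b4 : (i \in S -> unitary2 A) ->
  \sum_(k < 6) \sum_a \sum_a' local_tensor i (design_mx k *m A) a a' b1 b2 b3 b4 =
  if i \in S then delta_id b1 b2 b3 b4 + delta_swap b1 b2 b3 b4
  else 6 * delta_id b1 b2 b3 b4.
Proof.
move=> unitA; rewrite /local_tensor /qubit_op /outcome.
case: (boolP (i \in S)) => iS; last first.
  rewrite /= sumr_const card_ord !big_bool !conjC_nat /delta_id.
  by case: b1; case: b2; case: b3; case: b4 => /=; ring.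
transitivity (\sum_k (design_mx k *m A) (b2o (z i)) (b2o b1)
   * ((design_mx k *m A) (b2o (z i)) (b2o b2))^*
   * (design_mx k *m A) (b2o (z i)) (b2o b3) * ((design_mx k *m A) (b2o (z i)) (b2o b4))^*).
  apply: eq_bigr => k _.
  under eq_bigr => a _ do under eq_bigr => a' _ do rewrite -mulrA.
  by under eq_bigr => a _ do rewrite -mulr_sumr sum_delta; rewrite sum_delta.
rewrite design_moment; last exact: unitA.
by rewrite /delta_id /delta_swap !(inj_eq b2o_inj).
Qed.

Lemma sum_probU_sqr_design M : (forall i, i \in S -> unitary2 (M i)) ->
  (\sum_(k : {ffun 'I_n -> 'I_6}) probU S (design_mul k M) psi z ^+ 2)%:C%C =
  moment4 psi (fun i b1 b2 b3 b4 =>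
    if i \in S then delta_id b1 b2 b3 b4 + delta_swap b1 b2 b3 b4
    else 6 * delta_id b1 b2 b3 b4).
Proof.
move=> unitM; rewrite rmorph_sum /=.
under eq_bigr do rewrite probU_sqrE.
under eq_bigr => k _ do under eq_bigr => x _ do
  rewrite (sum_moment4 psi (fun i a' => local_tensor i (design_mx (k i) *m M i) (x i) a')).
under eq_bigr => k _ do rewrite (sum_moment4 psi (fun i a b1 b2 b3 b4 =>
  \sum_a' local_tensor i (design_mx (k i) *m M i) a a' b1 b2 b3 b4)).
rewrite (sum_moment4 psi (fun i k b1 b2 b3 b4 =>
  \sum_a \sum_a' local_tensor i (design_mx k *m M i) a a' b1 b2 b3 b4)).
by apply: eq_moment4 => i b1 b2 b3 b4; apply: local_design_sum => /unitM.
Qed.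

Lemma sum_probU_sqr_purity M :
  \sum_(x : bits n) sqnorm (psi x) = 1 -> (forall i, i \in S -> unitary2 (M i)) ->
  (\sum_(k : {ffun 'I_n -> 'I_6}) probU S (design_mul k M) psi z ^+ 2)%:C%C =
  6 ^+ #|~: S| * \sum_(A : {set 'I_n} | A \subset S) purity psi A.
Proof.
move=> normalized unitM; rewrite sum_probU_sqr_design //.
under eq_bigr => A _ do rewrite purity_moment4 //.
rewrite sum_subsets_moment4 -prod_if1 -moment4_scale.
by apply: eq_moment4 => i b1 b2 b3 b4; case: (i \in S); rewrite ?mul1r.
Qed.

Definition design_avg M : R :=
  (6 ^+ n)^-1 * \sum_(k : {ffun 'I_n -> 'I_6}) probU S (design_mul k M) psi z ^+ 2.

Lemma conc_ent_design_avg M :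
  \sum_(x : bits n) sqnorm (psi x) = 1 -> (forall i, i \in S -> unitary2 (M i)) ->
  conc_ent psi S = ((1 - 3 ^+ #|S| * design_avg M)%:C)%C.
Proof.
move=> normalized unitM.
rewrite /conc_ent /design_avg rmorphB rmorph1 !rmorphM /= rmorphXn fmorphV rmorphXn.
rewrite !rmorph_nat sum_probU_sqr_purity // !mulrA.
congr (1 - _ * _).
have split6 : (6 : C) ^+ n = 2 ^+ #|S| * 3 ^+ #|S| * 6 ^+ #|~: S|.
  by rewrite -exprMn -natrM -exprD cardsC card_ord.
rewrite split6; field.
by rewrite !expf_neq0 ?pnatr_eq0.
Qed.

Lemma design_avg_invariant M M' :
  \sum_(x : bits n) sqnorm (psi x) = 1 ->
  (forall i, i \in S -> unitary2 (M i)) -> (forall i, i \in S -> unitary2 (M' i)) ->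
  design_avg M = design_avg M'.
Proof.
move=> normalized unitM unitM'.
have three_s_neq0 : (3 : R) ^+ #|S| != 0 by rewrite expf_neq0 ?pnatr_eq0.
have := conc_ent_design_avg normalized unitM.
by rewrite (conc_ent_design_avg normalized unitM') => /complexI/addrI/oppr_inj/(mulfI three_s_neq0).
Qed.

End Expansion.

Section ComplexMeasurable.
Context d (T : measurableType d) (R : realType).
Local Notation C := R[i].
Local Open Scope classical_set_scope.

Definition cmeasurable (f : T -> C) :=
  measurable_fun setT (fun t => complex.Re (f t)) /\
  measurable_fun setT (fun t => complex.Im (f t)).

Lemma cmeasurable_cst (c : C) : cmeasurable (fun _ => c).
Proof. by split; exact: measurable_cst. Qed.

Lemma cmeasurableD f g : cmeasurable f -> cmeasurable g -> cmeasurable (fun t => f t + g t).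
Proof.
move=> [mf1 mf2] [mg1 mg2]; split.
  by under eq_fun do rewrite Re_add; exact: measurable_funD.
by under eq_fun do rewrite Im_add; exact: measurable_funD.
Qed.

Lemma cmeasurableM f g : cmeasurable f -> cmeasurable g -> cmeasurable (fun t => f t * g t).
Proof.
move=> [mf1 mf2] [mg1 mg2]; split.
  by under eq_fun do rewrite Re_mul; apply: measurable_funB; exact: measurable_funM.
by under eq_fun do rewrite Im_mul; apply: measurable_funD; exact: measurable_funM.
Qed.

Lemma cmeasurable_sum (I : Type) (s : seq I) (F : I -> T -> C) :
  (forall i, cmeasurable (F i)) -> cmeasurable (fun t => \sum_(i <- s) F i t).
Proof.
move=> mF; elim: s => [|a s IH].
  by under eq_fun do rewrite big_nil; exact: cmeasurable_cst.
by under eq_fun do rewrite big_cons; exact: cmeasurableD.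
Qed.

Lemma cmeasurable_prod (I : Type) (s : seq I) (F : I -> T -> C) :
  (forall i, cmeasurable (F i)) -> cmeasurable (fun t => \prod_(i <- s) F i t).
Proof.
move=> mF; elim: s => [|a s IH].
  by under eq_fun do rewrite big_nil; exact: cmeasurable_cst.
by under eq_fun do rewrite big_cons; exact: cmeasurableM.
Qed.

Lemma measurable_sqnorm f : cmeasurable f -> measurable_fun setT (fun t => sqnorm (f t)).
Proof. by move=> [mf1 mf2]; apply: measurable_funD; exact: measurable_funX. Qed.

Lemma measurable_probU n (S : {set 'I_n}) (psi : bits n -> C) (z : bits n)
    (M : T -> 'I_n -> 'M[C]_2) :
  (forall i a b, cmeasurable (fun t => M t i a b)) ->
  measurable_fun setT (fun t => probU S (M t) psi z).
Proof.
move=> mM; rewrite /probU; under eq_fun do rewrite big_mkcond.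
apply: measurable_sum => x; case: [forall i, (i \in S) ==> (x i == z i)];
  last exact: measurable_cst.
apply: measurable_sqnorm; apply: cmeasurable_sum => y.
apply: cmeasurableM; last exact: cmeasurable_cst.
by apply: cmeasurable_prod => i; case: (i \in S); [exact: mM | exact: cmeasurable_cst].
Qed.

End ComplexMeasurable.

Section Coordinates.
Variable R : realType.
Local Notation C := R[i].
Local Open Scope classical_set_scope.

Definition of_coords (t : 8.-tuple R) : 'M[C]_2 := \matrix_(a, b)
  Complex (tnth t (inord (4 * a + 2 * b))) (tnth t (inord (4 * a + 2 * b + 1))).

Lemma mx_coordsK : cancel (@mx_coords R) of_coords.
Proof.
have ReImK (x : C) : Complex (complex.Re x) (complex.Im x) = x by case: x.
move=> M; apply/matrixP => a b; rewrite mxE.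
case: a => [[|[|//]]] ?; case: b => [[|[|//]]] ?;
  rewrite !(tnth_nth 0) !inordK //= ReImK; congr (M _ _); exact: val_inj.
Qed.

Context d (T : measurableType d).

Lemma measurable_mx_coords (F : T -> 'M[C]_2) :
  (forall a b, cmeasurable (fun t => F t a b)) -> measurable_fun setT (fun t => mx_coords (F t)).
Proof.
move=> mF; apply/measurable_fun_tnthP => j.
case: j => [[|[|[|[|[|[|[|[|//]]]]]]]] ?];
  rewrite /comp; under eq_fun do rewrite (tnth_nth 0) /=.
- exact: (mF ord0 ord0).1.
- exact: (mF ord0 ord0).2.
- exact: (mF ord0 ord_max).1.
- exact: (mF ord0 ord_max).2.
- exact: (mF ord_max ord0).1.
- exact: (mF ord_max ord0).2.
- exact: (mF ord_max ord_max).1.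
- exact: (mF ord_max ord_max).2.
Qed.

Lemma cmeasurable_of_coords (g : T -> 8.-tuple R) a b : measurable_fun setT g ->
  cmeasurable (fun t => of_coords (g t) a b).
Proof.
by move=> mg; split; under eq_fun do rewrite mxE /=;
  exact: (measurableT_comp (measurable_tnth _) mg).
Qed.

End Coordinates.

Section TupleLaw.
Local Open Scope classical_set_scope.
Context d d' (Omega : measurableType d) (T : measurableType d') (R : realType)
  (P : probability Omega R) (n : nat).

Definition tuple_mtype : measurableType (measure_tuple_display d') := n.-tuple T.

Definition rect (A : 'I_n -> set T) : set tuple_mtype := [set t | forall i, A i (tnth t i)].

Definition rects : set (set tuple_mtype) :=
  [set B | exists A : 'I_n -> set T, (forall i, measurable (A i)) /\ B = rect A].

Lemma measurable_rect A : (forall i, measurable (A i)) -> measurable (rect A).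
Proof.
move=> mA.
have -> : rect A = \bigcap_(i in [set: 'I_n]) ((fun t : tuple_mtype => tnth t i) @^-1` A i).
  by apply/seteqP; split => t /= At i; [move=> _|]; apply: At.
apply: fin_bigcap_measurable; first exact: finite_finset.
move=> i _; rewrite -[X in measurable X]setTI; exact: measurable_tnth.
Qed.

Lemma measurable_sub_rects : measurable `<=` <<s rects >>.
Proof.
move=> B mB; have : g_sigma_preimage (fun i (t : n.-tuple T) => tnth t i) B := mB.
apply: smallest_sub; first exact: smallest_sigma_algebra.
move=> C; rewrite -bigcup_seq /= => -[i _ [Y mY <-]].
apply: sub_sigma_algebra; exists (fun j => if j == i then Y else setT); split.
  by move=> j; case: ifP.
apply/seteqP; split => t /=; first by move=> [_ Yt] j; case: ifP => // /eqP ->.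
by move=> Yt; split => //; have := Yt i; rewrite eqxx.
Qed.

Lemma distribution_eq_rects (X Y : {mfun Omega >-> tuple_mtype}) :
  (forall A, (forall i, measurable (A i)) -> P (X @^-1` rect A) = P (Y @^-1` rect A)) ->
  forall B, measurable B -> distribution P X B = distribution P Y B.
Proof.
move=> XY B mB; have rects_measurable : rects `<=` measurable.
  by move=> _ [A [mA ->]]; exact: measurable_rect.
apply: (g_sigma_algebra_measure_unique rects rects_measurable (fun _ => setT)).
- by move=> _; exists (fun _ => setT); split => //; apply/seteqP; split.
- by apply/seteqP; split => // t _; exists 0%N.
- move=> _ _ [A [mA ->]] [A' [mA' ->]]; exists (fun i => A i `&` A' i); split.
    by move=> i; apply: measurableI.
  by apply/seteqP; split => t /=; [move=> [At A't] i | move=> AA't; split => i; case: (AA't i)].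
- by move=> _ [A [mA ->]]; exact: XY.
- by move=> k; change (P (X @^-1` setT) < +oo)%E; rewrite preimage_setT probability_setT ltry.
- exact: measurable_sub_rects.
Qed.

Lemma ge0_integral_eq_rects (X Y : Omega -> tuple_mtype) (f : tuple_mtype -> \bar R) :
  measurable_fun setT X -> measurable_fun setT Y ->
  (forall A, (forall i, measurable (A i)) -> P (X @^-1` rect A) = P (Y @^-1` rect A)) ->
  measurable_fun setT f -> (forall t, (0 <= f t)%E) ->
  (\int[P]_w f (X w) = \int[P]_w f (Y w))%E.
Proof.
move=> mX mY XY mf f0.
pose Xm : {mfun Omega >-> tuple_mtype} := HB.pack X (isMeasurableFun.Build _ _ _ _ X mX).
pose Ym : {mfun Omega >-> tuple_mtype} := HB.pack Y (isMeasurableFun.Build _ _ _ _ Y mY).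
rewrite -[LHS](@ge0_integral_distribution _ _ _ _ _ P Xm f) //.
rewrite -[RHS](@ge0_integral_distribution _ _ _ _ _ P Ym f) //.
by apply: eq_measure_integral => B mB _; exact: (@distribution_eq_rects Xm Ym).
Qed.

End TupleLaw.

Lemma ge0_integral_scaled_sum (R : realType) d (T : measurableType d)
    (mu : {measure set T -> \bar R}) (K : finType) (h : K -> T -> R) (c : R) :
  0 <= c -> (forall k, measurable_fun setT (h k)) -> (forall k t, 0 <= h k t) ->
  (\int[mu]_t ((c * \sum_k h k t)%:E) = c%:E * \sum_k \int[mu]_t (h k t)%:E)%E.
Proof.
move=> c0 mh h0; under eq_integral do rewrite EFinM.
rewrite ge0_integralZl_EFin //; first last.
- by apply/measurable_EFinP; exact: measurable_sum.
- by move=> t _; rewrite lee_fin; apply: sumr_ge0.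
congr (_ * _)%E; under eq_integral do rewrite -sumEFin.
rewrite ge0_integral_sum // => k; first exact/measurable_EFinP.
by move=> t _; rewrite lee_fin.
Qed.

Section HaarTuple.
Local Open Scope classical_set_scope.
Variables (R : realType) (n : nat) (S : {set 'I_n}).
Local Notation C := R[i].
Context d (Omega : measurableType d) (P : probability Omega R) (U : 'I_n -> Omega -> 'M[C]_2).
Hypothesis haarU : forall i, i \in S -> haar_unitary P (U i).
Hypothesis indepU : mutually_independent P S U.

Local Notation coords := (@mx_coords R).

Definition mulmx_coords (V : 'M[C]_2) (t : 8.-tuple R) : 8.-tuple R :=
  coords (V *m of_coords t).

Lemma measurable_mulmx_coords V : measurable_fun setT (mulmx_coords V).
Proof.
apply: measurable_mx_coords => a b; under eq_fun do rewrite mxE.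
apply: cmeasurable_sum => l; apply: cmeasurableM; first exact: cmeasurable_cst.
exact: cmeasurable_of_coords.
Qed.

Lemma mulmx_coordsE V M : mulmx_coords V (coords M) = coords (V *m M).
Proof. by rewrite /mulmx_coords mx_coordsK. Qed.

(* Qubits outside S get the constant 1: U i is only assumed measurable for i in S. *)
Definition haar_tuple (V : 'I_n -> 'M[C]_2) (w : Omega) : tuple_mtype _ n :=
  [tuple if i \in S then coords (V i *m U i w) else coords 1%:M | i < n].

Lemma measurable_haar_tuple V : measurable_fun setT (haar_tuple V).
Proof.
apply/measurable_fun_tnthP => i; rewrite /comp.
under eq_fun do rewrite tnth_mktuple.
case: (boolP (i \in S)) => iS; last exact: measurable_cst.
have [_ mU _] := haarU iS.
under eq_fun do rewrite -mulmx_coordsE.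
exact: measurableT_comp (measurable_mulmx_coords _) mU.
Qed.

Lemma haar_tuple_rect V (A : 'I_n -> set (8.-tuple R)) :
  (forall i, i \in S -> unitary2 (V i)) -> (forall i, measurable (A i)) ->
  P (haar_tuple V @^-1` rect A) = P (haar_tuple (fun _ => 1%:M) @^-1` rect A).
Proof.
move=> unitV mA.
have [Aout | Nout] := pselect (forall i, i \notin S -> A i (coords 1%:M)); last first.
  have empty W : haar_tuple W @^-1` rect A = set0.
    apply/seteqP; split => w // Aw; apply: Nout => i iNS.
    by have := Aw i; rewrite tnth_mktuple (negbTE iNS).
  by rewrite !empty.
have onS W : haar_tuple W @^-1` rect A =
    [set w | forall i, i \in S -> A i (coords (W i *m U i w))].
  apply/seteqP; split => w Aw i; first by move=> iS; have := Aw i; rewrite tnth_mktuple iS.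
  by rewrite tnth_mktuple; case: ifP => iS; [exact: Aw | apply: Aout; rewrite iS].
pose A' i := mulmx_coords (V i) @^-1` A i.
have mA' i : measurable (A' i).
  by have := measurable_mulmx_coords (V i) measurableT (mA i); rewrite setTI.
rewrite !onS.
under [in RHS]eq_set do under eq_forall do rewrite mul1mx.
transitivity (P [set w | forall i, i \in S -> A' i (coords (U i w))]).
  by congr (P _); apply/seteqP; split => w Aw i /Aw; rewrite /A' /= mulmx_coordsE.
rewrite (indepU mA') (indepU mA); apply: eq_bigr => i iS.
have [_ _ invariant] := haarU iS.
rewrite -(invariant (V i) (unitV i iS) (A i) (mA i)).
by congr (P _); apply/seteqP; split => w; rewrite /A' /= mulmx_coordsE.
Qed.

Variables (psi : bits n -> C) (z : bits n).

Definition probU_sqr_coords (t : tuple_mtype (8.-tuple R) n) : R :=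
  probU S (fun i => of_coords (tnth t i)) psi z ^+ 2.

Lemma measurable_probU_sqr_coords : measurable_fun setT probU_sqr_coords.
Proof.
apply: measurable_funX; apply: measurable_probU => i a b.
exact: cmeasurable_of_coords (measurable_tnth i).
Qed.

Lemma probU_sqr_haar_tuple V w :
  probU S (fun i => V i *m U i w) psi z ^+ 2 = probU_sqr_coords (haar_tuple V w).
Proof.
by congr (_ ^+ 2); apply: eq_probU => i iS; rewrite tnth_mktuple iS mx_coordsK.
Qed.

Lemma probU_sqr_haar_tuple1 w :
  probU S (fun i => U i w) psi z ^+ 2 = probU_sqr_coords (haar_tuple (fun _ => 1%:M) w).
Proof.
by rewrite -probU_sqr_haar_tuple; congr (_ ^+ 2); apply: eq_probU => i _; rewrite mul1mx.
Qed.

Lemma measurable_probU_sqr_mul V :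
  measurable_fun setT (fun w => probU S (fun i => V i *m U i w) psi z ^+ 2).
Proof.
under eq_fun do rewrite probU_sqr_haar_tuple.
exact: measurableT_comp measurable_probU_sqr_coords (measurable_haar_tuple V).
Qed.

Lemma measurable_probU_sqr :
  measurable_fun setT (fun w => probU S (fun i => U i w) psi z ^+ 2).
Proof.
under eq_fun do rewrite probU_sqr_haar_tuple1.
exact: measurableT_comp measurable_probU_sqr_coords (measurable_haar_tuple _).
Qed.

Lemma expectation_probU_sqr_mul V : (forall i, i \in S -> unitary2 (V i)) ->
  (\int[P]_w (probU S (fun i => V i *m U i w) psi z ^+ 2)%:E =
   \int[P]_w (probU S (fun i => U i w) psi z ^+ 2)%:E)%E.
Proof.
move=> unitV.
under [RHS]eq_integral do rewrite probU_sqr_haar_tuple1.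
under [LHS]eq_integral do rewrite probU_sqr_haar_tuple.
apply: (ge0_integral_eq_rects (f := fun t => (probU_sqr_coords t)%:E)).
- exact: measurable_haar_tuple.
- exact: measurable_haar_tuple.
- by move=> A mA; exact: haar_tuple_rect.
- by apply/measurable_EFinP; exact: measurable_probU_sqr_coords.
- by move=> t; rewrite lee_fin sqr_ge0.
Qed.

Lemma expectation_probU_sqr_design_avg :
  (\int[P]_w (probU S (fun i => U i w) psi z ^+ 2)%:E =
   \int[P]_w (design_avg S psi z (fun i => U i w))%:E)%E.
Proof.
have inv6n_ge0 : 0 <= ((6 : R) ^+ n)^-1 by rewrite invr_ge0 exprn_ge0.
rewrite /design_avg /design_mul ge0_integral_scaled_sum //; first last.
- by move=> k w; exact: sqr_ge0.
- by move=> k; exact: measurable_probU_sqr_mul.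
have twirl (k : {ffun 'I_n -> 'I_6}) :
    (\int[P]_w (probU S (fun i => design_mx (k i) *m U i w) psi z ^+ 2)%:E =
     \int[P]_w (probU S (fun i => U i w) psi z ^+ 2)%:E)%E.
  by apply: expectation_probU_sqr_mul => i _; exact: design_mx_unitary.
under eq_bigr do rewrite twirl.
rewrite -(ge0_integral_scaled_sum _ (h := fun _ w => probU S (fun i => U i w) psi z ^+ 2)) //;
  first last.
- by move=> k w; exact: sqr_ge0.
- by move=> k; exact: measurable_probU_sqr.
apply: eq_integral => w _; congr EFin.
rewrite sumr_const card_ffun !card_ord -[_ ^+ 2 *+ _]mulr_natr natrX mulrCA.
by rewrite mulVf ?mulr1 // expf_neq0 ?pnatr_eq0.
Qed.

End HaarTuple.

Theorem proposition3 (R : realType) (n : nat) (psi : bits n -> R[i])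
    (S : {set 'I_n}) (d : measure_display) (Omega : measurableType d)
    (P : probability Omega R) (U : 'I_n -> Omega -> 'M[R[i]]_2) (z : bits n) :
  \sum_(x : bits n) sqnorm (psi x) = 1 ->
  S != finset.set0 ->
  (forall i, i \in S -> haar_unitary P (U i)) ->
  mutually_independent P S U ->
  exists e : R,
    (\int[P]_w ((probU S (fun i => U i w) psi z) ^+ 2)%:E)%E = e%:E /\
    conc_ent psi S = ((1 - 3 ^+ #|S| * e)%:C)%C.
Proof.
move=> normalized _ haarU indepU.
have unit1 i : i \in S -> unitary2 (1%:M : 'M[R[i]]_2) by move=> _; exact: unitary2_1.
have unitU w i : i \in S -> unitary2 (U i w) by move=> /haarU [].
exists (design_avg S psi z (fun _ => 1%:M)).
split; last exact: conc_ent_design_avg.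
rewrite (expectation_probU_sqr_design_avg haarU indepU).
under eq_integral => w _ do rewrite (design_avg_invariant z normalized (unitU w) unit1).
rewrite integral_cst // -[RHS]mule1; congr (_ * _)%E; exact: probability_setT.
Qed.
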